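(* A $\mathsf V$-functor $m:M\to X$ is L-dense if, and only if, for all $\mathsf V$-functors $f,g:X\to Y$ with $f\cdot m=g\cdot m$ one has $f\cong g$.
   Context: Let $\mathsf V=(\mathsf V,\otimes,k)$ be a commutative unital quantale (complete lattice with commutative associative $\otimes$ having neutral element $k$, with $u\otimes(-)$ preserving suprema). A $\mathsf V$-category $(X,a)$ is a set with $a:X\times X\to\mathsf V$ such that $k\le a(x,x)$ and $a(x,y)\otimes a(y,z)\le a(x,z)$; a $\mathsf V$-functor $f:(X,a)\to(Y,b)$ satisfies $a(x,y)\le b(f(x),f(y))$. For $\mathsf V$-functors $f,g:X\to(Y,b)$, $f\cong g$ means $k\le b(f(x),g(x))$ and $k\le b(g(x),f(x))$ for all $x\in X$. A $\mathsf V$-functor $m:(M,c)\to(X,a)$ is L-dense if $a(x,x')=\bigvee_{z\in M}a(x,m(z))\otimes a(m(z),x')$ for all $x,x'\in X$. *)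

Set Implicit Arguments.

Record Quantale := {
  qcar :> Type;
  qle : qcar -> qcar -> Prop;
  qle_refl : forall u, qle u u;
  qle_trans : forall u v w, qle u v -> qle v w -> qle u w;
  qle_antisym : forall u v, qle u v -> qle v u -> u = v;
  qsup : (qcar -> Prop) -> qcar;
  qsup_ub : forall (S : qcar -> Prop) u, S u -> qle u (qsup S);
  qsup_least : forall (S : qcar -> Prop) w,
      (forall u, S u -> qle u w) -> qle (qsup S) w;
  qten : qcar -> qcar -> qcar;
  qk : qcar;
  qten_assoc : forall u v w, qten u (qten v w) = qten (qten u v) w;
  qten_comm : forall u v, qten u v = qten v u;
  qten_k : forall u, qten qk u = u;
  qten_sup : forall u (S : qcar -> Prop),
      qten u (qsup S) = qsup (fun w => exists s, S s /\ w = qten u s)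
}.

Arguments qle {q}.
Arguments qsup {q}.
Arguments qten {q}.
Arguments qk {q}.

Record VCat (V : Quantale) := {
  vobj :> Type;
  vhom : vobj -> vobj -> V;
  vhom_refl : forall x, qle qk (vhom x x);
  vhom_trans : forall x y z, qle (qten (vhom x y) (vhom y z)) (vhom x z)
}.

Arguments vhom {V v}.

Definition is_Vfunctor {V : Quantale} {X Y : VCat V} (f : X -> Y) : Prop :=
  forall x y, qle (vhom x y) (vhom (f x) (f y)).

Definition Viso {V : Quantale} {X Y : VCat V} (f g : X -> Y) : Prop :=
  forall x, qle qk (vhom (f x) (g x)) /\ qle qk (vhom (g x) (f x)).

Definition L_dense {V : Quantale} {M X : VCat V} (m : M -> X) : Prop :=
  forall x x' : X,
    vhom x x' = qsup (fun w => exists z : M, w = qten (vhom x (m z)) (vhom (m z) x')).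

(* If m is L-dense, then k <= a(x,x) = \/_z a(x,mz) ⊗ a(mz,x), and each term is
   bounded by b(fx,fmz) ⊗ b(gmz,gx) <= b(fx,gx) whenever fm = gm.
   Conversely, L-density amounts to k <= d(x,x) for the "hom through M"
   d(x,x') = \/_z a(x,mz) ⊗ a(mz,x'). Glue two copies of X, using d for the
   homs between the copies and identifying the points of the image of m.
   The two inclusions agree on the image of m, and their isomorphism at a
   point x outside the image is exactly k <= d(x,x). *)
From Stdlib Require Import ClassicalEpsilon Bool.

Section QuantaleFacts.
Variable V : Quantale.

Lemma qten_monor (u v v' : V) : qle v v' -> qle (qten u v) (qten u v').
Proof.
  intro Hv.
  assert (Hsup : qsup (fun s => s = v \/ s = v') = v').
  { apply qle_antisym.
    - apply qsup_least. intros s [-> | ->]; [exact Hv | apply qle_refl].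
    - apply qsup_ub. now right. }
  rewrite <- Hsup, qten_sup. apply qsup_ub. exists v. split; auto.
Qed.

Lemma qten_monol (u u' v : V) : qle u u' -> qle (qten u v) (qten u' v).
Proof. intro Hu. rewrite (qten_comm _ u), (qten_comm _ u'). now apply qten_monor. Qed.

Lemma qten_mono (u u' v v' : V) :
  qle u u' -> qle v v' -> qle (qten u v) (qten u' v').
Proof. intros Hu Hv. eapply qle_trans; [apply qten_monol, Hu | apply qten_monor, Hv]. Qed.

Lemma qten_sup_leP (t w : V) (S : V -> Prop) :
  (forall s, S s -> qle (qten t s) w) -> qle (qten t (qsup S)) w.
Proof. intro HS. rewrite qten_sup. apply qsup_least. intros u [s [Ss ->]]. auto. Qed.

Lemma qsup_ten_leP (t w : V) (S : V -> Prop) :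
  (forall s, S s -> qle (qten s t) w) -> qle (qten (qsup S) t) w.
Proof.
  intro HS. rewrite qten_comm. apply qten_sup_leP. intros s Ss. rewrite qten_comm. auto.
Qed.

End QuantaleFacts.

Section HomThrough.
Variables (V : Quantale) (M X : VCat V) (m : M -> X).

Definition hom_through (x x' : X) : V :=
  qsup (fun w => exists z : M, w = qten (vhom x (m z)) (vhom (m z) x')).

Lemma hom_through_ub x x' z :
  qle (qten (vhom x (m z)) (vhom (m z) x')) (hom_through x x').
Proof. apply qsup_ub. eauto. Qed.

Lemma hom_through_le_hom x x' : qle (hom_through x x') (vhom x x').
Proof. apply qsup_least. intros s [z ->]. apply vhom_trans. Qed.

Lemma hom_comp_through x y x' :
  qle (qten (vhom x y) (hom_through y x')) (hom_through x x').
Proof.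
  apply qten_sup_leP. intros s [z ->]. rewrite qten_assoc.
  eapply qle_trans; [| apply (hom_through_ub x x' z)].
  apply qten_monol, vhom_trans.
Qed.

Lemma hom_through_comp x y x' :
  qle (qten (hom_through x y) (vhom y x')) (hom_through x x').
Proof.
  apply qsup_ten_leP. intros s [z ->]. rewrite <- qten_assoc.
  eapply qle_trans; [| apply (hom_through_ub x x' z)].
  apply qten_monor, vhom_trans.
Qed.

Lemma hom_through_comp_through x y x' :
  qle (qten (hom_through x y) (hom_through y x')) (vhom x x').
Proof.
  eapply qle_trans; [apply qten_mono; apply hom_through_le_hom |].
  apply vhom_trans.
Qed.

Lemma hom_le_through_imgl z x' : qle (vhom (m z) x') (hom_through (m z) x').
Proof.
  eapply qle_trans; [| apply (hom_through_ub (m z) x' z)].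
  rewrite <- (qten_k _ (vhom (m z) x')) at 1.
  apply qten_monol, vhom_refl.
Qed.

Lemma hom_le_through_imgr x z : qle (vhom x (m z)) (hom_through x (m z)).
Proof.
  eapply qle_trans; [| apply (hom_through_ub x (m z) z)].
  rewrite <- (qten_k _ (vhom x (m z))) at 1. rewrite qten_comm.
  apply qten_monor, vhom_refl.
Qed.

Lemma L_dense_unit : L_dense m <-> forall x, qle qk (hom_through x x).
Proof.
  split.
  - intros Hdense x. unfold hom_through. rewrite <- (Hdense x x). apply vhom_refl.
  - intros Hunit x x'. apply qle_antisym; [| apply hom_through_le_hom].
    rewrite <- (qten_k _ (vhom x x')) at 1.
    eapply qle_trans; [apply qten_monol, (Hunit x) | apply hom_through_comp].
Qed.

Lemma hom_through_le_hom_map (Y : VCat V) (f g : X -> Y) :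
  is_Vfunctor f -> is_Vfunctor g -> (forall z, f (m z) = g (m z)) ->
  forall x x', qle (hom_through x x') (vhom (f x) (g x')).
Proof.
  intros Hf Hg Hfg x x'. apply qsup_least. intros s [z ->].
  eapply qle_trans; [| apply (vhom_trans _ (f x) (f (m z)) (g x'))].
  apply qten_mono; [apply Hf | rewrite Hfg; apply Hg].
Qed.

Definition glued_hom (p q : X * bool) : V :=
  if Bool.eqb (snd p) (snd q) then vhom (fst p) (fst q) else hom_through (fst p) (fst q).

Lemma glued_hom_refl p : qle qk (glued_hom p p).
Proof. unfold glued_hom. rewrite eqb_reflx. apply vhom_refl. Qed.

Lemma glued_hom_trans p q r :
  qle (qten (glued_hom p q) (glued_hom q r)) (glued_hom p r).
Proof.
  destruct p as [x i], q as [y j], r as [w l]; unfold glued_hom; simpl.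
  destruct i, j, l; simpl;
    first [ apply vhom_trans | apply hom_comp_through | apply hom_through_comp
          | apply hom_through_comp_through ].
Qed.

Definition glued : VCat V :=
  {| vobj := X * bool; vhom := glued_hom;
     vhom_refl := glued_hom_refl; vhom_trans := glued_hom_trans |}.

Definition in_image (x : X) : bool :=
  if excluded_middle_informative (exists z, m z = x) then true else false.

Lemma in_imageP x : in_image x = true <-> exists z, m z = x.
Proof.
  unfold in_image. destruct excluded_middle_informative as [Hx | Hx]; split;
    solve [auto | discriminate | intro H; contradiction].
Qed.

Definition glued_top (x : X) : glued := (x, true).

(* Points of the image of m stay in the first copy, so that the two
   embeddings agree on m. *)
Definition glued_split (x : X) : glued := (x, in_image x).

Lemma glued_top_Vfunctor : is_Vfunctor glued_top.
Proof. intros x y. apply qle_refl. Qed.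

Lemma glued_split_Vfunctor : is_Vfunctor glued_split.
Proof.
  intros x y. simpl. unfold glued_hom, glued_split; simpl.
  destruct (in_image x) eqn:Ex, (in_image y) eqn:Ey; simpl; try apply qle_refl.
  - destruct (proj1 (in_imageP x) Ex) as [z <-]. apply hom_le_through_imgl.
  - destruct (proj1 (in_imageP y) Ey) as [z <-]. apply hom_le_through_imgr.
Qed.

Lemma glued_top_split_img z : glued_top (m z) = glued_split (m z).
Proof.
  unfold glued_top, glued_split.
  replace (in_image (m z)) with true; [reflexivity |].
  symmetry. apply in_imageP. eauto.
Qed.

Lemma unit_le_hom_through_of_iso :
  Viso glued_top glued_split -> forall x, qle qk (hom_through x x).
Proof.
  intros Hiso x. destruct (Hiso x) as [Hx _]. simpl in Hx.
  unfold glued_hom, glued_top, glued_split in Hx; simpl in Hx.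
  destruct (in_image x) eqn:Ex; [| exact Hx].
  destruct (proj1 (in_imageP x) Ex) as [z <-].
  eapply qle_trans; [apply vhom_refl | apply hom_le_through_imgl].
Qed.

End HomThrough.

Theorem mainTheorem5 (V : Quantale) (M X : VCat V) (m : M -> X) :
  is_Vfunctor m ->
  (L_dense m <->
   (forall (Y : VCat V) (f g : X -> Y),
      is_Vfunctor f -> is_Vfunctor g ->
      (forall z : M, f (m z) = g (m z)) ->
      Viso f g)).
Proof.
  intros _. rewrite L_dense_unit. split.
  - intros Hunit Y f g Hf Hg Hfg x.
    assert (Hgf : forall z, g (m z) = f (m z)) by (intro z; symmetry; apply Hfg).
    split; (eapply qle_trans; [apply (Hunit x) | apply hom_through_le_hom_map]); auto.
  - intros Hequal. apply unit_le_hom_through_of_iso.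
    apply Hequal.
    + apply glued_top_Vfunctor.
    + apply glued_split_Vfunctor.
    + apply glued_top_split_img.
Qed.
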